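(* Let $\mathcal{X}$ be a convex subset of a normed space with norm $\|\cdot\|$, dual norm $\|\cdot\|_*$. For each $x\in\mathcal{X}$ let $d_x$ be a distribution on a sample space $\mathcal{S}$ and let $f(\cdot;s)$ be $\alpha$-strongly convex and differentiable on $\mathcal{X}$ for each $s$. Let $F(y,x)=\mathbb{E}_{s\sim d_y}[f(x;s)]$ and assume $\|\nabla_2F(x,z)-\nabla_2F(y,z)\|_*\le\beta\|x-y\|$ for all $x,y,z$. Given $x_1$, at iteration $n$ draw samples $s_{n,1},\dots,s_{n,m_n}$ from $d_{x_n}$, let $g_n(x)=\frac1{m_n}\sum_{k=1}^{m_n}f(x;s_{n,k})$, $f_n(x)=F(x_n,x)$, and $x_{n+1}=\arg\min_{x\in\mathcal{X}}\sum_{k=1}^ng_k(x)$. Let $\xi_n=\nabla f_n-\nabla g_n$, $\bar\xi_{n}=\frac1n\sum_{k=1}^n\xi_k$, $\theta=\beta/\alpha$, and $S_n=\frac1{n-1}\sum_{k=1}^{n-1}\|x_n-x_k\|$. Then for all $n\ge2$, $$\|x_{n+1}-x_n\|\le\frac{\theta S_n}{n}+\frac{1}{n\alpha}\left(\|\xi_n(x_n)\|_*+\|\bar\xi_{n-1}(x_n)\|_*\right).$$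
   Context: This is the stochastic (finite-sample) version of the value aggregation algorithm AggreVaTe; minimizers are assumed to exist. $\nabla_2$ denotes the gradient in the second argument. *)

From HB Require Import structures.
From mathcomp Require Import all_boot all_order all_algebra.
From mathcomp Require Import all_classical all_reals all_analysis.
Set Implicit Arguments. Unset Strict Implicit. Unset Printing Implicit Defensive.
Import Order.TTheory GRing.Theory Num.Theory.
Import numFieldNormedType.Exports.
Local Open Scope classical_set_scope.
Local Open Scope ring_scope.

Definition convex_subset (R : realType) (V : normedModType R) (X : set V) :=
  forall x y (t : R), X x -> X y -> 0 <= t <= 1 -> X (t *: x + (1 - t) *: y).

Definition dual_norm (R : realType) (V : normedModType R) (L : V -> R) : R :=
  sup [set `|L v| | v in [set v : V | `|v| <= 1]].

(* alpha-strong convexity of a differentiable function on X (gradient form),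
   the gradient at x being the Frechet differential 'd f x. *)
Definition strongly_convex_on (R : realType) (V : normedModType R)
  (alpha : R) (X : set V) (f : V -> R) :=
  forall x y, X x -> X y ->
    f x + 'd f x (y - x) + alpha / 2 * `|y - x| ^+ 2 <= f y.

Definition Fexp (R : realType) (V : normedModType R) (dS : measure_display)
  (S : measurableType dS) (d : V -> probability S R) (f : S -> V -> R)
  (y x : V) : R :=
  fine (\int[d y]_s (f s x)%:E)%E.

Definition gsamp (R : realType) (V : normedModType R) (S : Type)
  (f : S -> V -> R) (m : nat -> nat) (s : nat -> nat -> S) (n : nat) (x : V) : R :=
  (m n)%:R^-1 * \sum_(1 <= k < (m n).+1) f (s n k) x.

Definition xi (R : realType) (V : normedModType R) (dS : measure_display)
  (S : measurableType dS) (d : V -> probability S R) (f : S -> V -> R)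
  (m : nat -> nat) (s : nat -> nat -> S) (x : nat -> V) (n : nat) (z : V) : V -> R :=
  fun v => 'd (Fexp d f (x n)) z v - 'd (gsamp f m s n) z v.

Definition xibar (R : realType) (V : normedModType R) (dS : measure_display)
  (S : measurableType dS) (d : V -> probability S R) (f : S -> V -> R)
  (m : nat -> nat) (s : nat -> nat -> S) (x : nat -> V) (n : nat) (z : V) : V -> R :=
  fun v => n%:R^-1 * \sum_(1 <= k < n.+1) xi d f m s x k z v.

Definition Savg (R : realType) (V : normedModType R) (x : nat -> V) (n : nat) : R :=
  (n.-1)%:R^-1 * \sum_(1 <= k < n) `|x n - x k|.

From HB Require Import structures.
From mathcomp Require Import all_boot all_order all_algebra.
From mathcomp Require Import all_classical all_reals all_analysis.
From mathcomp Require Import ring lra.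
Import Order.TTheory GRing.Theory Num.Theory.
Import numFieldNormedType.Exports.
Local Open Scope classical_set_scope.
Local Open Scope ring_scope.

(* Let G_n = g_1 + ... + g_n, which is (n alpha)-strongly convex, and
   D = |x_{n+1} - x_n|.  Strong monotonicity of the differential of G_n together
   with the first-order optimality of x_{n+1} for G_n and of x_n for G_{n-1}
   gives n alpha D^2 <= - dg_n(x_n)(x_{n+1} - x_n).  Since df_k = dg_k + xi_k,
   the differential - dg_n splits as
     xi_n - xibar_{n-1} - dG_{n-1} / (n-1) + (1/(n-1)) sum_{k<n} (df_k - df_n):
   the third term is again nonpositive in the direction x_{n+1} - x_n, and the
   last one is at most beta S_n D by the Lipschitz hypothesis.  Dividing by
   n alpha D gives the bound. *)

Section DualNorm.
Context {R : realType} {V : normedModType R}.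

Definition bounded_homogeneous (L : V -> R) :=
  (forall c v, L (c *: v) = c * L v) /\ exists r, forall v, `|L v| <= r * `|v|.

(* [dual_norm] is a [sup], which carries no information unless the set is
   bounded above. *)
Lemma dual_normP {L : V -> R} : bounded_homogeneous L ->
  0 <= dual_norm L /\ forall v, `|L v| <= dual_norm L * `|v|.
Proof.
move=> [homL [r bndL]].
have L0 : L 0 = 0 by rewrite -(scale0r (0 : V)) homL mul0r.
have ubL : has_ubound [set `|L v| | v in [set v : V | `|v| <= 1]].
  exists `|r| => _ [v /= v1 <-]; apply: le_trans (bndL v) _.
  apply: le_trans (ler_norm _) _; rewrite normrM normr_id.
  by rewrite ler_piMr.
have le_sup := ub_le_sup ubL.
split.
  rewrite -(normr0 R) -L0; apply: le_sup.
  by exists 0; rewrite /= ?normr0.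
move=> v; have [->|v0] := eqVneq v 0; first by rewrite L0 !normr0 mulr0.
have nv : 0 < `|v| by rewrite normr_gt0.
have unit_v : `| `|v|^-1 *: v | <= 1.
  by rewrite normrZ normfV normr_id mulVf ?gt_eqF.
have := le_sup _ (ex_intro2 _ _ (`|v|^-1 *: v) unit_v erefl).
by rewrite homL normrM normfV normr_id ler_pdivrMl // mulrC.
Qed.

Lemma bounded_homogeneous_diff {g : V -> R} {z} : differentiable g z ->
  bounded_homogeneous ('d g z).
Proof.
move=> dg; split=> [c v|]; first by rewrite linearZ.
have dg_cont : continuous ('d g z) by exact: diff_continuous.
have := @continuous_linear_bounded R V R^o 0 ('d g z) (dg_cont 0).
by move=> /linear_boundedP /pinfty_ex_gt0 [r _ bnd]; exists r.
Qed.

Lemma bounded_homogeneousB {L1 L2} : bounded_homogeneous L1 ->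
  bounded_homogeneous L2 -> bounded_homogeneous (fun v => L1 v - L2 v).
Proof.
move=> [hom1 [r1 bnd1]] [hom2 [r2 bnd2]]; split=> [c v|].
  by rewrite hom1 hom2 mulrBr.
by exists (r1 + r2) => v; rewrite (le_trans (ler_normB _ _)) // mulrDl lerD.
Qed.

Lemma bounded_homogeneousZ c {L} : bounded_homogeneous L ->
  bounded_homogeneous (fun v => c * L v).
Proof.
move=> [homL [r bndL]]; split=> [a v|]; first by rewrite homL mulrCA.
by exists (`|c| * r) => v; rewrite normrM -mulrA ler_wpM2l.
Qed.

Lemma bounded_homogeneous_sum (I : eqType) (r : seq I) (L : I -> V -> R) :
  {in r, forall i, bounded_homogeneous (L i)} ->
  bounded_homogeneous (fun v => \sum_(i <- r) L i v).
Proof.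
elim: r => [_|i r IHr homL].
  split=> [c v|]; first by rewrite !big_nil mulr0.
  by exists 0 => v; rewrite big_nil normr0 mul0r.
have [homS [rS bndS]] := IHr (fun j jr => homL j (mem_behead (s := i :: r) jr)).
have [homi [ri bndi]] := homL i (mem_head i r).
split=> [c v|]; first by rewrite !big_cons homi homS mulrDr.
exists (ri + rS) => v; rewrite big_cons (le_trans (ler_normD _ _)) //.
by rewrite mulrDl lerD.
Qed.

End DualNorm.

Section ConvexCalculus.
Context {R : realType} {V : normedModType R}.

Lemma is_diff_sum {W : normedModType R} {I : Type} (r : seq I)
    (F : I -> V -> W) z :
  (forall i, differentiable (F i) z) ->
  is_diff z (fun y => \sum_(i <- r) F i y) (fun v => \sum_(i <- r) 'd (F i) z v).
Proof.
move=> dF; rewrite -!fct_sumE.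
by elim/big_ind2: _ => [|g dg h dh *|i _]; [exact: is_diff_cst|exact: is_diffD|
  exact: differentiableP].
Qed.

Lemma differentiable_sum_seq {W : normedModType R} {I : Type} (r : seq I)
    (F : I -> V -> W) z :
  (forall i, differentiable (F i) z) ->
  differentiable (fun y => \sum_(i <- r) F i y) z.
Proof. by move=> dF; have [] := is_diff_sum r F z dF. Qed.

Lemma diff_ge0_of_min_on {X : set V} {g : V -> R} {z y} :
  convex_subset X -> X z -> X y -> differentiable g z ->
  (forall u, X u -> g z <= g u) -> 0 <= 'd g z (y - z).
Proof.
move=> convX Xz Xy dg zmin; rewrite -deriveE //.
have quot_cvg : (fun h : R => h^-1 *: ((g \o shift z) (h *: (y - z)) - g z))
    @ 0^' --> 'D_(y - z) g z.
  exact: (@diff_derivable R V R^o g z (y - z) dg).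
move/cvg_dnbhs_at_right/cvgr_to_ge : quot_cvg; apply.
near=> h.
have h_gt0 : 0 < h by near: h; exact: nbhs_right_gt.
have h_lt1 : h < 1 by near: h; exact: nbhs_right_lt.
rewrite /= -[_ *: _]/(h^-1 * _) mulr_ge0 ?invr_ge0 ?(ltW h_gt0) //.
rewrite subr_ge0 addrC.
have -> : z + h *: (y - z) = h *: y + (1 - h) *: z.
  by rewrite scalerBr scalerBl scale1r addrCA addrC.
by apply/zmin/convX; rewrite ?ltW.
Unshelve. all: by end_near. Qed.

Lemma strongly_convex_on_diff_mono {a} {X : set V} {g z w} :
  strongly_convex_on a X g -> X z -> X w ->
  a * `|w - z| ^+ 2 <= - ('d g z (w - z) + 'd g w (z - w)).
Proof.
move=> scg Xz Xw; have := scg _ _ Xz Xw; have := scg _ _ Xw Xz.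
rewrite distrC; lra.
Qed.

Lemma strongly_convex_onZ c a (X : set V) g : 0 <= c ->
  (forall z, X z -> differentiable g z) -> strongly_convex_on a X g ->
  strongly_convex_on (c * a) X (fun y => c * g y).
Proof.
move=> c_ge0 dg scg z y Xz Xy.
have -> : (fun y => c * g y) = c *: g by apply/funext.
rewrite diffZ /=; last exact: dg.
rewrite -[c *: _]/(c * _) -!(mulrA c) -!mulrDr ler_wpM2l //.
exact: scg.
Qed.

Lemma strongly_convex_on_sum {I : Type} (r : seq I) (F : I -> V -> R) a
    (X : set V) :
  (forall i z, X z -> differentiable (F i) z) ->
  (forall i, strongly_convex_on a X (F i)) ->
  strongly_convex_on ((size r)%:R * a) X (fun y => \sum_(i <- r) F i y).
Proof.
move=> dF scF z y Xz Xy.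
rewrite (diff_val (is_diff_def := is_diff_sum r F z (fun i => dF i z Xz))).
have -> : (size r)%:R * a / 2 * `|y - z| ^+ 2 = \sum_(i <- r) (a / 2 * `|y - z| ^+ 2).
  by rewrite big_const_seq count_predT iter_addr_0 -[RHS]mulr_natl !mulrA.
rewrite -!big_split /=.
by apply: ler_sum => i _; exact: scF.
Qed.

End ConvexCalculus.

Definition gsamp_sum {R : realType} {V : normedModType R} {Smp : Type}
    (f : Smp -> V -> R) (m : nat -> nat) (s : nat -> nat -> Smp) n y :=
  \sum_(1 <= k < n.+1) gsamp f m s k y.

Section SampleAverage.
Context {R : realType} {V : normedModType R} {Smp : Type}.
Context {f : Smp -> V -> R} {m : nat -> nat} {s : nat -> nat -> Smp}.
Context {X : set V} {alpha : R}.
Hypothesis f_diff : forall sv z, X z -> differentiable (f sv) z.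
Hypothesis f_sc : forall sv, strongly_convex_on alpha X (f sv).

Lemma differentiable_gsamp k z : X z -> differentiable (gsamp f m s k) z.
Proof.
move=> Xz; have -> : gsamp f m s k =
    (m k)%:R^-1 *: (fun y => \sum_(1 <= j < (m k).+1) f (s k j) y).
  by apply/funext.
by apply/differentiableZ/differentiable_sum_seq => j; exact: f_diff.
Qed.

Lemma gsamp_strongly_convex k : (0 < m k)%N ->
  strongly_convex_on alpha X (gsamp f m s k).
Proof.
move=> mk_gt0; set r := index_iota 1 (m k).+1.
have sc_sum := strongly_convex_on_sum r (fun j => f (s k j)) alpha X
  (fun j => f_diff (s k j)) (fun j => f_sc (s k j)).
have d_sum z : X z -> differentiable (fun y => \sum_(j <- r) f (s k j) y) z.
  by move=> Xz; apply: differentiable_sum_seq => j; exact: f_diff.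
have := strongly_convex_onZ (m k)%:R^-1 _ _ _ _ d_sum sc_sum.
rewrite size_iota subn1 mulrA mulVf ?mul1r ?pnatr_eq0 -?lt0n //.
by apply; rewrite invr_ge0.
Qed.

Lemma is_diff_gsamp_sum n z : X z ->
  is_diff z (gsamp_sum f m s n)
    (fun v => \sum_(1 <= k < n.+1) 'd (gsamp f m s k) z v).
Proof. by move=> Xz; apply: is_diff_sum => k; exact: differentiable_gsamp. Qed.

Lemma differentiable_gsamp_sum n z : X z -> differentiable (gsamp_sum f m s n) z.
Proof. by move=> Xz; have [] := is_diff_gsamp_sum n z Xz. Qed.

Lemma gsamp_sum_strongly_convex n : (forall k, (0 < m k)%N) ->
  strongly_convex_on (n%:R * alpha) X (gsamp_sum f m s n).
Proof.
move=> m_gt0; have := strongly_convex_on_sum (index_iota 1 n.+1) (gsamp f m s)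
  alpha X differentiable_gsamp (fun k => gsamp_strongly_convex k (m_gt0 k)).
by rewrite size_iota subn1.
Qed.

End SampleAverage.

Lemma le_div_of_sqr_le {R : realFieldType} (a D K : R) :
  0 < a -> 0 <= D -> 0 <= K -> a * D ^+ 2 <= K * D -> D <= K / a.
Proof.
move=> a_gt0 D_ge0 K_ge0 le_aD2; rewrite ler_pdivlMr // mulrC.
have [->|D_neq0] := eqVneq D 0; first by rewrite mulr0.
have D_gt0 : 0 < D by rewrite lt_neqAle eq_sym D_neq0.
by rewrite -(ler_pM2r D_gt0) -mulrA -expr2.
Qed.

Section Iterates.
Context {R : realType} {V : normedModType R}.
Context {dS : measure_display} {S : measurableType dS}.
Context {X : set V} {d : V -> probability S R} {f : S -> V -> R}.
Context {alpha beta : R} {m : nat -> nat} {s : nat -> nat -> S} {x : nat -> V}.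
Hypothesis convX : convex_subset X.
Hypothesis f_diff : forall sv z, X z -> differentiable (f sv) z.
Hypothesis f_sc : forall sv, strongly_convex_on alpha X (f sv).
Hypothesis F_diff : forall y z, X y -> X z -> differentiable (Fexp d f y) z.
Hypothesis F_lip : forall y1 y2 z, X y1 -> X y2 -> X z ->
  dual_norm (fun v => 'd (Fexp d f y1) z v - 'd (Fexp d f y2) z v)
    <= beta * `|y1 - y2|.
Hypothesis m_gt0 : forall n, (0 < m n)%N.
Hypothesis X_x1 : X (x 1%N).
Hypothesis alpha_gt0 : 0 < alpha.
Hypothesis x_argmin : forall n, (1 <= n)%N ->
  X (x n.+1) /\ forall y, X y -> gsamp_sum f m s n (x n.+1) <= gsamp_sum f m s n y.

Lemma iterate_in k : (0 < k)%N -> X (x k).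
Proof. by case: k => [//|[_|k _]]; [exact: X_x1 | exact: (x_argmin k.+1 isT).1]. Qed.

Lemma Fexp_diff_lip y1 y2 z v : X y1 -> X y2 -> X z ->
  'd (Fexp d f y2) z v - 'd (Fexp d f y1) z v <= beta * `|y1 - y2| * `|v|.
Proof.
move=> Xy1 Xy2 Xz.
have [_ /(_ v) le_dual] := dual_normP (bounded_homogeneousB
  (bounded_homogeneous_diff (F_diff _ _ Xy1 Xz))
  (bounded_homogeneous_diff (F_diff _ _ Xy2 Xz))).
rewrite -opprB (le_trans (ler_norm _)) // normrN (le_trans le_dual) //.
by rewrite ler_wpM2r ?F_lip.
Qed.

Lemma beta_dist_ge0 y1 y2 : X y1 -> X y2 -> 0 <= beta * `|y1 - y2|.
Proof.
move=> Xy1 Xy2; apply: le_trans (F_lip _ _ _ Xy1 Xy2 Xy1).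
by have [] := dual_normP (bounded_homogeneousB
  (bounded_homogeneous_diff (F_diff _ _ Xy1 Xy1))
  (bounded_homogeneous_diff (F_diff _ _ Xy2 Xy1))).
Qed.

Lemma beta_Savg_ge0 n : 0 <= beta * Savg x n.+1.
Proof.
rewrite /Savg mulrCA mulr_sumr mulr_ge0 ?invr_ge0 // big_nat sumr_ge0 //.
move=> k /andP[k_gt0 _].
by apply: beta_dist_ge0; apply: iterate_in.
Qed.

Lemma Fexp_diff_spread_le n v : (0 < n)%N ->
  n%:R^-1 * \sum_(1 <= k < n.+1)
      ('d (Fexp d f (x k)) (x n.+1) v - 'd (Fexp d f (x n.+1)) (x n.+1) v)
    <= beta * Savg x n.+1 * `|v|.
Proof.
move=> n_gt0; rewrite /Savg /= mulrCA -!mulrA ler_wpM2l ?invr_ge0 //.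
rewrite mulrA mulr_sumr mulr_suml !big_nat ler_sum // => k /andP[k_gt0 _].
by apply: Fexp_diff_lip; apply: iterate_in.
Qed.

Lemma bounded_homogeneous_xi k z : (0 < k)%N -> X z ->
  bounded_homogeneous (xi d f m s x k z).
Proof.
move=> k_gt0 Xz; apply: bounded_homogeneousB; apply: bounded_homogeneous_diff.
  exact: F_diff (iterate_in _ k_gt0) Xz.
exact: differentiable_gsamp f_diff _ _ Xz.
Qed.

Lemma bounded_homogeneous_xibar n z : X z ->
  bounded_homogeneous (xibar d f m s x n z).
Proof.
move=> Xz; apply/bounded_homogeneousZ/bounded_homogeneous_sum => k.
by rewrite mem_index_iota => /andP[k_gt0 _]; exact: bounded_homogeneous_xi.
Qed.

Lemma diff_gsamp_sum_ge0 n y : (0 < n)%N -> X y ->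
  0 <= 'd (gsamp_sum f m s n) (x n.+1) (y - x n.+1).
Proof.
move=> n_gt0 Xy; have [Xw w_min] := x_argmin _ n_gt0.
exact: diff_ge0_of_min_on convX Xw Xy (differentiable_gsamp_sum f_diff n _ Xw) w_min.
Qed.

Lemma diff_gsamp_sumS n z v : X z ->
  'd (gsamp_sum f m s n.+1) z v =
    'd (gsamp_sum f m s n) z v + 'd (gsamp f m s n.+1) z v.
Proof.
move=> Xz.
rewrite !(diff_val (is_diff_def := is_diff_gsamp_sum (m := m) (s := s) f_diff _ _ Xz)).
by rewrite big_nat_recr.
Qed.

Lemma step_sqr_le_neg_diff n : (0 < n)%N ->
  n.+1%:R * alpha * `|x n.+2 - x n.+1| ^+ 2
    <= - 'd (gsamp f m s n.+1) (x n.+1) (x n.+2 - x n.+1).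
Proof.
move=> n_gt0; have Xz := iterate_in n.+1 isT; have Xw := iterate_in n.+2 isT.
have G_sc := gsamp_sum_strongly_convex (s := s) f_diff f_sc n.+1 m_gt0.
have := strongly_convex_on_diff_mono G_sc Xz Xw.
have := diff_gsamp_sum_ge0 n.+1 _ isT Xz; have := diff_gsamp_sum_ge0 n _ n_gt0 Xw.
rewrite (diff_gsamp_sumS _ _ _ Xz); lra.
Qed.

Lemma neg_diff_gsamp_decomp n z v : (0 < n)%N -> X z ->
  - 'd (gsamp f m s n.+1) z v =
    xi d f m s x n.+1 z v - xibar d f m s x n z v
    - n%:R^-1 * 'd (gsamp_sum f m s n) z v
    + n%:R^-1 * \sum_(1 <= k < n.+1)
        ('d (Fexp d f (x k)) z v - 'd (Fexp d f (x n.+1)) z v).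
Proof.
move=> n_gt0 Xz.
rewrite (diff_val (is_diff_def := is_diff_gsamp_sum (m := m) (s := s) f_diff _ _ Xz)).
rewrite /xibar /xi !sumrB sumr_const_nat subn1 -mulr_natr.
by field; rewrite pnatr_eq0 -lt0n.
Qed.

Lemma step_sqr_le_bound n : (0 < n)%N ->
  n.+1%:R * alpha * `|x n.+2 - x n.+1| ^+ 2 <=
    (beta * Savg x n.+1 + dual_norm (xi d f m s x n.+1 (x n.+1))
      + dual_norm (xibar d f m s x n (x n.+1))) * `|x n.+2 - x n.+1|.
Proof.
move=> n_gt0; have Xz := iterate_in n.+1 isT; have Xw := iterate_in n.+2 isT.
set v := x n.+2 - x n.+1.
have xi_le : xi d f m s x n.+1 (x n.+1) v
    <= dual_norm (xi d f m s x n.+1 (x n.+1)) * `|v|.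
  have [_ /(_ v) norm_le] := dual_normP (bounded_homogeneous_xi n.+1 _ isT Xz).
  exact: le_trans (ler_norm _) norm_le.
have xibar_le : - xibar d f m s x n (x n.+1) v
    <= dual_norm (xibar d f m s x n (x n.+1)) * `|v|.
  have [_ /(_ v) norm_le] := dual_normP (bounded_homogeneous_xibar n _ Xz).
  by rewrite (le_trans _ norm_le) // -normrN ler_norm.
have P_ge0 : 0 <= n%:R^-1 * 'd (gsamp_sum f m s n) (x n.+1) v.
  by rewrite mulr_ge0 ?invr_ge0 //; exact: diff_gsamp_sum_ge0.
have := step_sqr_le_neg_diff n n_gt0; rewrite neg_diff_gsamp_decomp // -/v.
have := Fexp_diff_spread_le n v n_gt0.
rewrite !mulrDl; lra.
Qed.

Lemma step_le n : (0 < n)%N ->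
  `|x n.+2 - x n.+1| <=
    (beta * Savg x n.+1 + dual_norm (xi d f m s x n.+1 (x n.+1))
      + dual_norm (xibar d f m s x n (x n.+1))) / (n.+1%:R * alpha).
Proof.
move=> n_gt0; have Xz := iterate_in n.+1 isT.
have [N1_ge0 _] := dual_normP (bounded_homogeneous_xi n.+1 _ isT Xz).
have [N2_ge0 _] := dual_normP (bounded_homogeneous_xibar n _ Xz).
apply: le_div_of_sqr_le (step_sqr_le_bound n n_gt0) => //.
  by rewrite mulr_gt0 ?ltr0n.
by rewrite !addr_ge0 ?beta_Savg_ge0.
Qed.

End Iterates.

Theorem lemma11 (R : realType) (V : normedModType R) (X : set V)
  (dS : measure_display) (S : measurableType dS)
  (d : V -> probability S R) (f : S -> V -> R) (alpha beta : R)
  (m : nat -> nat) (s : nat -> nat -> S) (x : nat -> V) :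
  convex_subset X ->
  0 < alpha ->
  (forall sv, forall z, X z -> differentiable (f sv) z) ->
  (forall sv, strongly_convex_on alpha X (f sv)) ->
  (forall y z, X y -> X z -> differentiable (Fexp d f y) z) ->
  (forall y1 y2 z, X y1 -> X y2 -> X z ->
     dual_norm (fun v => 'd (Fexp d f y1) z v - 'd (Fexp d f y2) z v)
       <= beta * `|y1 - y2|) ->
  (forall n, (0 < m n)%N) ->
  X (x 1%N) ->
  (forall n, (1 <= n)%N ->
     X (x n.+1) /\
     forall y, X y -> \sum_(1 <= k < n.+1) gsamp f m s k (x n.+1)
                      <= \sum_(1 <= k < n.+1) gsamp f m s k y) ->
  forall n, (2 <= n)%N ->
    `|x n.+1 - x n| <=
      (beta / alpha) * Savg x n / n%:R
      + (n%:R * alpha)^-1 *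
        (dual_norm (xi d f m s x n (x n)) + dual_norm (xibar d f m s x n.-1 (x n))).
Proof.
move=> convX alpha_gt0 f_diff f_sc F_diff F_lip m_gt0 X_x1 x_argmin [//|n] n_ge2.
have := step_le convX f_diff f_sc F_diff F_lip m_gt0 X_x1 alpha_gt0 x_argmin n n_ge2.
move/le_trans; apply.
rewrite le_eqVlt; apply/predU1P; left; field.
by rewrite gt_eqF //= nat1r pnatr_eq0.
Qed.
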